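(* Let $A$ be an archimedean $*$-algebra, $x\in A$ with $x=x^*$, and $\bar x$ its image in $C^*(A)$. Then $\bar x\geq0$ in $C^*(A)$ if and only if $x+\alpha\in A_+$ for every positive rational $\alpha$.
   Context: A $*$-algebra is a unital algebra over $\mathbb{Q}$ with a $\mathbb{Q}$-linear involution $x\mapsto x^*$ satisfying $(xy)^*=y^*x^*$; rational scalars are identified with multiples of the unit. $A_+=\{\sum_{i=1}^n x_i^*x_i: n\in\mathbb{N},x_i\in A\}$, and $x\leq y$ means $y-x\in A_+$. For $x\in A$, $\|x\|=\sqrt{\inf\{\alpha\in\mathbb{Q}_{>0}: x^*x\leq\alpha\}}\in[0,\infty]$; $A_i=\{x:\|x\|=0\}$. $A$ is archimedean if $-1\notin A_+$ and $\|x\|<\infty$ for all $x$. $C^*(A)=\mathbb{C}\otimes_{\mathbb{R}}C^*_{\mathbb{R}}(A)$, where $C^*_{\mathbb{R}}(A)$ is the completion of $A/A_i$ with respect to the norm induced by $\|\cdot\|$. *)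

From HB Require Import structures.
From mathcomp Require Import all_boot all_order all_algebra.
Set Implicit Arguments. Unset Strict Implicit. Unset Printing Implicit Defensive.
Import Order.TTheory GRing.Theory Num.Theory.
Local Open Scope ring_scope.

Section StarAlg.
Variable A : lalgType rat.
Variable star : A -> A.

Definition is_star : Prop :=
  [/\ forall x y : A, star (x + y) = star x + star y,
      forall (a : rat) (x : A), star (a *: x) = a *: star x,
      forall x : A, star (star x) = x &
      forall x y : A, star (x * y) = star y * star x].

Definition Apos (y : A) : Prop :=
  exists s : seq A, y = \sum_(z <- s) (star z * z).

Definition sle (x y : A) : Prop := Apos (y - x).

(* the set {alpha in Q_{>0} : x^* x <= alpha} whose infimum is ||x||^2 *)
Definition norm_set (x : A) (a : rat) : Prop := 0 < a /\ sle (star x * x) a%:A.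

Definition norm_finite (x : A) : Prop := exists a, norm_set x a.

Definition norm2_lt (x : A) (e : rat) : Prop := exists a, norm_set x a /\ a < e.

Definition archimedean : Prop := ~ Apos (- 1) /\ forall x : A, norm_finite x.

Definition cauchy (f : nat -> A) : Prop :=
  forall e : rat, 0 < e -> exists N : nat, forall m n : nat,
    (N <= m)%N -> (N <= n)%N -> norm2_lt (f m - f n) e.

(* two Cauchy sequences define the same element of C*_R(A) *)
Definition seq_equiv (f g : nat -> A) : Prop :=
  forall e : rat, 0 < e -> exists N : nat, forall n : nat,
    (N <= n)%N -> norm2_lt (f n - g n) e.

(* Elements of C*(A) = C (x)_R C*_R(A) are u + i v with u, v in C*_R(A),
   with (u + i v)^* = u^* - i v^*.  For z = a + i b (a, b Cauchy sequences)
   z^* z = (a^* a + b^* b) + i (a^* b - b^* a).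
   xbar >= 0 in C*(A) iff xbar = z^* z for some z in C*(A). *)
Definition cstar_nonneg (x : A) : Prop :=
  exists a b : nat -> A, cauchy a /\ cauchy b /\
    seq_equiv (fun n => star (a n) * a n + star (b n) * b n) (fun _ => x) /\
    seq_equiv (fun n => star (a n) * b n - star (b n) * a n) (fun _ => 0).

End StarAlg.

From HB Require Import structures.
From mathcomp Require Import all_boot all_order all_algebra.
From mathcomp Require Import ring lra.
Set Implicit Arguments. Unset Strict Implicit. Unset Printing Implicit Defensive.
Import Order.TTheory GRing.Theory Num.Theory.
Local Open Scope ring_scope.

(* If [xbar = zbar^* zbar] with [z = a + i b], then for large [n] the hermitian
   element [y = a_n^* a_n + b_n^* b_n - x] satisfies [y^2 <= c] for a rational
   [c < alpha^2], so [alpha - y] is a sum of hermitian squares, and so is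
   [x + alpha = a_n^* a_n + b_n^* b_n + (alpha - y)].
   Conversely, archimedeanity gives [x <= l] for some rational [l >= 1], and the
   hypothesis makes [s = 1 - x / l^2] satisfy [-1 - e <= s <= 1 + e] for all
   [e > 0].  The polynomials [y_0 = 0], [y_(n+1) = (s + y_n^2) / 2] in [x]
   converge in norm to [1 - sqrt (1 - s)]: their increments are dominated by
   those of the same recursion [z_n] at [s = 1], for which [1 - z_n <= 2 / (n + 2)].
   Hence [l (1 - y_n)] is a Cauchy sequence whose square tends to
   [l^2 (1 - s) = x].  Every inequality is obtained in the commutative algebra
   [Q[x]] by writing the relevant polynomial as a positive combination of squares. *)

Lemma scalerAr_rat (A : lalgType rat) (a : rat) (x y : A) :
  x * (a *: y) = a *: (x * y).
Proof. exact: (rat_linear (mulrBr x)). Qed.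

Section StarAlgebra.
Variables (A : lalgType rat) (star : A -> A).
Hypothesis star_is_star : is_star star.

Lemma starD x y : star (x + y) = star x + star y. Proof. by case: star_is_star. Qed.
Lemma starZ (a : rat) x : star (a *: x) = a *: star x. Proof. by case: star_is_star. Qed.
Lemma starK x : star (star x) = x. Proof. by case: star_is_star. Qed.
Lemma starM x y : star (x * y) = star y * star x. Proof. by case: star_is_star. Qed.

Lemma star0 : star 0 = 0.
Proof. by have := starZ 0 0; rewrite !scale0r. Qed.

Lemma starN x : star (- x) = - star x.
Proof. by have := starZ (-1) x; rewrite !scaleN1r. Qed.

Lemma starB x y : star (x - y) = star x - star y.
Proof. by rewrite starD starN. Qed.

Lemma star1 : star 1 = 1.
Proof. by rewrite -[LHS]mulr1 -{2}[1]starK -starM mulr1 starK. Qed.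

Lemma star_alg (c : rat) : star c%:A = c%:A.
Proof. by rewrite starZ star1. Qed.

Local Notation Apos := (Apos star).

Lemma Apos0 : Apos 0.
Proof. by exists [::]; rewrite big_nil. Qed.

Lemma AposD x y : Apos x -> Apos y -> Apos (x + y).
Proof. by move=> [s ->] [t ->]; exists (s ++ t); rewrite big_cat. Qed.

Lemma Apos_sqr z : Apos (star z * z).
Proof. by exists [:: z]; rewrite big_seq1. Qed.

Lemma Apos_conj w y : Apos y -> Apos (star w * y * w).
Proof.
move=> [s ->]; exists [seq z * w | z <- s]; rewrite big_map.
elim: s => [|z s IHs]; first by rewrite !big_nil mulr0 mul0r.
by rewrite !big_cons -IHs mulrDr mulrDl starM !mulrA.
Qed.

Lemma Apos_natmul y n : Apos y -> Apos (y *+ n).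
Proof.
move=> y_pos; elim: n => [|n IHn]; first by rewrite mulr0n; exact: Apos0.
by rewrite mulrS; apply: AposD.
Qed.

Lemma Apos_scale_sqr (e : rat) y : Apos y -> Apos ((e * e) *: y).
Proof.
move=> [s ->]; exists [seq e *: z | z <- s]; rewrite big_map scaler_sumr.
by apply: eq_bigr => z _; rewrite starZ -scalerAl scalerAr_rat scalerA.
Qed.

(* A nonnegative rational is [(numq c * denq c) / denq c ^ 2]. *)
Lemma Apos_scale (c : rat) y : 0 <= c -> Apos y -> Apos (c *: y).
Proof.
move=> c_ge0 y_pos; set d : rat := (denq c)%:~R.
have d_neq0 : d != 0 by rewrite intr_eq0 denq_neq0.
have nd_ge0 : 0 <= numq c * denq c by rewrite mulr_ge0 ?numq_ge0 // ltW.
have -> : c = (d^-1 * d^-1) * (numq c * denq c)%:~R.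
  by rewrite intrM numqE /d; field.
rewrite -scalerA; apply: Apos_scale_sqr.
case: (numq c * denq c) nd_ge0 => [n|//] _.
by rewrite -[n%:~R]/(n%:R) scaler_nat; apply: Apos_natmul.
Qed.

Lemma Apos_alg (c : rat) : 0 <= c -> Apos c%:A.
Proof.
by move=> c_ge0; apply: Apos_scale => //; rewrite -[1]mulr1 -{1}star1; apply: Apos_sqr.
Qed.

Lemma norm2_lt0 (e : rat) : 0 < e -> norm2_lt star 0 e.
Proof.
move=> e_gt0; exists (e / 2); split; last by lra.
split; first by lra.
by rewrite /sle star0 mul0r subr0; apply: Apos_alg; lra.
Qed.

End StarAlgebra.

Section Evaluation.
Variables (A : lalgType rat) (h : A).

Lemma commr_in_alg : commr_rmorph (in_alg A) h.
Proof.
move=> c; rewrite /GRing.comm /= mulr_algl.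
by rewrite -[c%:A]/(c *: 1) scalerAr_rat mulr1.
Qed.

Definition ev := horner_morph commr_in_alg.

Lemma evX : ev 'X = h. Proof. exact: horner_morphX. Qed.
Lemma evC c : ev c%:P = c%:A. Proof. exact: horner_morphC. Qed.

End Evaluation.

HB.instance Definition _ (A : lalgType rat) (h : A) := GRing.RMorphism.on (ev h).

Section PolynomialCalculus.
Variables (A : lalgType rat) (star : A -> A).
Hypothesis star_is_star : is_star star.
Variable h : A.
Hypothesis h_herm : star h = h.

Local Notation ev := (ev h).

Lemma ev_herm p : star (ev p) = ev p.
Proof.
elim/poly_ind: p => [|p c IHp]; first by rewrite rmorph0 (star0 star_is_star).
have ev_Xp : ev ('X * p) = h * ev p by rewrite rmorphM /= evX.
rewrite rmorphD rmorphM /= evX evC (starD star_is_star) (starM star_is_star).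
by rewrite h_herm IHp (star_alg star_is_star) -ev_Xp -commr_polyX rmorphM /= evX.
Qed.

Definition ev_pos p := Apos star (ev p).

Lemma ev_posD p q : ev_pos p -> ev_pos q -> ev_pos (p + q).
Proof. rewrite /ev_pos rmorphD /=. exact: AposD. Qed.

Lemma ev_pos_sqr q : ev_pos (q * q).
Proof. by rewrite /ev_pos rmorphM /= -{1}ev_herm; apply: Apos_sqr. Qed.

Lemma ev_pos_conj q p : ev_pos p -> ev_pos (q * q * p).
Proof.
rewrite /ev_pos -mulrA [q * p]mulrC mulrA !rmorphM /= => p_pos.
by rewrite -{1}ev_herm; apply: Apos_conj.
Qed.

Lemma ev_posZ c p : 0 <= c -> ev_pos p -> ev_pos (c%:P * p).
Proof.
by rewrite /ev_pos rmorphM /= evC mulr_algl; apply: (Apos_scale star_is_star).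
Qed.

Lemma ev_posC c : 0 <= c -> ev_pos c%:P.
Proof. by rewrite /ev_pos evC; apply: (Apos_alg star_is_star). Qed.

Lemma ev_pos_divl (c : rat) p q : 0 < c -> c%:P * p = q -> ev_pos q -> ev_pos p.
Proof.
move=> c_gt0 <- q_pos; rewrite -[p]mul1r -(polyC1) -(mulVf (lt0r_neq0 c_gt0)).
by rewrite polyCM -mulrA; apply: ev_posZ; rewrite // invr_ge0 ltW.
Qed.

(* [2 lam (lam - h) = (lam - h)^2 + (lam^2 - mu) + (mu - h^2)] *)
Lemma Apos_sub_of_sqr (mu lam : rat) : 0 < lam -> mu <= lam ^+ 2 ->
  Apos star (mu%:A - h * h) -> Apos star (lam%:A - h).
Proof.
move=> lam_gt0 mu_le h2_le; rewrite -(evC h) -[X in _ - X](evX h) -rmorphB.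
apply: (@ev_pos_divl (2 * lam) _
  ((lam%:P - 'X) * (lam%:P - 'X) + (lam ^+ 2 - mu)%:P + (mu%:P - 'X * 'X))).
- by rewrite mulr_gt0.
- by ring.
apply: ev_posD; last by rewrite /ev_pos rmorphB rmorphM /= evC evX.
by apply: ev_posD; [exact: ev_pos_sqr | apply: ev_posC; rewrite subr_ge0].
Qed.

(* [2 d (d^2 - p^2) = (d + p)^2 (d - p) + (d - p)^2 (d + p)] *)
Lemma ev_pos_sqr_sub (d : rat) p : 0 < d ->
  ev_pos (d%:P - p) -> ev_pos (d%:P + p) -> ev_pos ((d ^+ 2)%:P - p * p).
Proof.
move=> d_gt0 dBp_pos dDp_pos.
apply: (@ev_pos_divl (2 * d) _
  ((d%:P + p) * (d%:P + p) * (d%:P - p) + (d%:P - p) * (d%:P - p) * (d%:P + p))).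
- by rewrite mulr_gt0.
- by ring.
by apply: ev_posD; apply: ev_pos_conj.
Qed.

Definition ev_normle p (r : rat) :=
  forall b : rat, 0 < b -> ev_pos ((r ^+ 2 + b)%:P - p * p).

Lemma ev_normleC c : 0 <= c -> ev_normle c%:P c.
Proof.
move=> c_ge0 b b_gt0; have -> : (c ^+ 2 + b)%:P - c%:P * c%:P = b%:P by ring.
by apply: ev_posC; rewrite ltW.
Qed.

Lemma ev_normleN p r : ev_normle p r -> ev_normle (- p) r.
Proof. by move=> p_le b b_gt0; rewrite mulrNN; apply: p_le. Qed.

Lemma ev_normle_le p r r' : 0 <= r -> r <= r' -> ev_normle p r -> ev_normle p r'.
Proof.
move=> r_ge0 r_le p_le b b_gt0.
have -> : (r' ^+ 2 + b)%:P - p * p =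
          (r' ^+ 2 - r ^+ 2)%:P + ((r ^+ 2 + b)%:P - p * p) by ring.
apply: ev_posD; last exact: p_le.
by apply: ev_posC; rewrite subr_ge0 ler_sqr // nnegrE (le_trans r_ge0).
Qed.

Lemma ev_normle_limit p r : 0 <= r ->
  (forall e : rat, 0 < e -> ev_normle p (r + e)) -> ev_normle p r.
Proof.
move=> r_ge0 p_le b b_gt0.
pose e := b / (4 * r + 2 + b).
have e_gt0 : 0 < e by rewrite divr_gt0 //; lra.
have eD : e * (4 * r + 2 + b) = b by rewrite mulfVK // gt_eqF //; lra.
have -> : (r ^+ 2 + b)%:P - p * p = (r ^+ 2 + b - (r + e) ^+ 2 - b / 2)%:P +
          (((r + e) ^+ 2 + b / 2)%:P - p * p) by ring.
apply: ev_posD; last by apply: p_le; lra.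
apply: ev_posC; have : e <= 1 by nra.
clearbody e; nra.
Qed.

(* [r s ((r + s)^2 - (p + q)^2)
     = (r + s) (s (r^2 - p^2) + r (s^2 - q^2)) + (s p - r q)^2] *)
Lemma ev_normleD_pos p q r s : 0 < r -> 0 < s ->
  ev_normle p r -> ev_normle q s -> ev_normle (p + q) (r + s).
Proof.
move=> r_gt0 s_gt0 p_le q_le b b_gt0.
pose b' := b * r * s / (r + s) ^+ 2.
have b'_gt0 : 0 < b' by rewrite divr_gt0 ?exprn_gt0 ?mulr_gt0 ?addr_gt0.
have Eb : (r + s) ^+ 2 * b' = b * r * s.
  by rewrite mulrC mulfVK // expf_neq0 // gt_eqF ?addr_gt0.
apply: (@ev_pos_divl (r * s) _
  (((r + s) * s)%:P * ((r ^+ 2 + b')%:P - p * p) +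
   ((r + s) * r)%:P * ((s ^+ 2 + b')%:P - q * q) +
   (s%:P * p - r%:P * q) * (s%:P * p - r%:P * q) +
   (b * r * s - (r + s) ^+ 2 * b')%:P)).
- exact: mulr_gt0.
- by ring.
rewrite Eb subrr; apply: ev_posD; last exact: ev_posC.
apply: ev_posD; last exact: ev_pos_sqr.
apply: ev_posD; apply: ev_posZ; rewrite ?mulr_ge0 ?addr_ge0 ?ltW //.
  exact: p_le.
exact: q_le.
Qed.

Lemma ev_normleD p q r s : 0 <= r -> 0 <= s ->
  ev_normle p r -> ev_normle q s -> ev_normle (p + q) (r + s).
Proof.
move=> r_ge0 s_ge0 p_le q_le; apply: ev_normle_limit; first exact: addr_ge0.
move=> e e_gt0; have -> : r + s + e = (r + e / 2) + (s + e / 2) by field.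
apply: ev_normleD_pos; try lra.
  by apply: ev_normle_le p_le => //; lra.
by apply: ev_normle_le q_le => //; lra.
Qed.

(* [(r s)^2 + b - (p q)^2 = q^2 (r^2 + b' - p^2) + (r^2 + b') (s^2 + b' - q^2) + c]
   with [c >= 0] once [b'] is small. *)
Lemma ev_normleM p q r s : 0 <= r -> 0 <= s ->
  ev_normle p r -> ev_normle q s -> ev_normle (p * q) (r * s).
Proof.
move=> r_ge0 s_ge0 p_le q_le b b_gt0.
pose b' := b / (r ^+ 2 + s ^+ 2 + 1 + b).
have b'_gt0 : 0 < b' by rewrite divr_gt0 //; nra.
have eD : b' * (r ^+ 2 + s ^+ 2 + 1 + b) = b by rewrite mulfVK // gt_eqF //; nra.
have -> : ((r * s) ^+ 2 + b)%:P - p * q * (p * q) =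
    q * q * ((r ^+ 2 + b')%:P - p * p) + (r ^+ 2 + b')%:P * ((s ^+ 2 + b')%:P - q * q)
    + ((r * s) ^+ 2 + b - (r ^+ 2 + b') * (s ^+ 2 + b'))%:P by ring.
apply: ev_posD; last first.
  apply: ev_posC; have : b' <= 1 by nra.
  clearbody b'; nra.
apply: ev_posD; first exact/ev_pos_conj/p_le.
by apply: ev_posZ; [nra | exact: q_le].
Qed.

Lemma ev_normleZ c p r : 0 <= c -> 0 <= r ->
  ev_normle p r -> ev_normle (c%:P * p) (c * r).
Proof. by move=> c_ge0 r_ge0; apply: ev_normleM => //; apply: ev_normleC. Qed.

Lemma ev_normle_between p r : 0 <= r ->
  (forall e : rat, 0 < e -> ev_pos ((r + e)%:P - p) /\ ev_pos ((r + e)%:P + p)) ->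
  ev_normle p r.
Proof.
move=> r_ge0 p_between; apply: ev_normle_limit => // e e_gt0 b b_gt0.
have [rBp_pos rDp_pos] := p_between e e_gt0.
have -> : ((r + e) ^+ 2 + b)%:P - p * p = b%:P + (((r + e) ^+ 2)%:P - p * p) by ring.
apply: ev_posD; first by apply: ev_posC; rewrite ltW.
by apply: ev_pos_sqr_sub; rewrite ?ltr_wpDl.
Qed.

Lemma norm2_lt_ev p r e : 0 <= r -> r ^+ 2 < e -> ev_normle p r ->
  norm2_lt star (ev p) e.
Proof.
move=> r_ge0 r2_lt p_le; exists (r ^+ 2 + (e - r ^+ 2) / 2); split; last by lra.
split; first by nra.
have := p_le ((e - r ^+ 2) / 2) ltac:(lra).
by rewrite /ev_pos /sle rmorphB rmorphM /= evC ev_herm.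
Qed.

End PolynomialCalculus.

Fixpoint sqrt_iter1 (n : nat) : rat :=
  if n is n'.+1 then 2^-1 * (1 + sqrt_iter1 n' ^+ 2) else 0.

Lemma sqrt_iter1_bound n : 0 <= sqrt_iter1 n <= 1.
Proof.
elim: n => [|n /andP[z_ge0 z_le1]] /=; first exact: ler01.
by apply/andP; split; nra.
Qed.

Lemma sqrt_iter1_le_succ n : sqrt_iter1 n <= sqrt_iter1 n.+1.
Proof. by have /andP[z_ge0 z_le1] := sqrt_iter1_bound n; rewrite /=; nra. Qed.

Lemma sqrt_iter1_homo : {homo sqrt_iter1 : i j / (i <= j)%N >-> i <= j}.
Proof.
by apply: homo_leq => [//|y x z|]; [exact: le_trans | exact: sqrt_iter1_le_succ].
Qed.

(* With [w := 1 - z] and [u := w (n + 2)], the recursion gives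
   [2 - w' (n + 3) >= (2 - u) (1 - w / 2)]. *)
Lemma sqrt_iter1_rate n : (1 - sqrt_iter1 n) * (n%:R + 2) <= 2.
Proof.
elim: n => [|n IHn] /=; first lra.
have /andP[z_ge0 z_le1] := sqrt_iter1_bound n.
have n_ge0 : (0 : rat) <= n%:R by rewrite ler0n.
have : 0 <= (2 - (1 - sqrt_iter1 n) * (n%:R + 2)) * (1 + sqrt_iter1 n).
  by apply: mulr_ge0; lra.
have := sqr_ge0 (1 - sqrt_iter1 n); rewrite -[n.+1%:R]natr1; nra.
Qed.

Lemma sqrt_iter1_sub_ge0 i j : (i <= j)%N -> 0 <= sqrt_iter1 j - sqrt_iter1 i.
Proof. by move=> ij; rewrite subr_ge0 sqrt_iter1_homo. Qed.

Lemma sqrt_iter1_sub_rate i j : (i <= j)%N ->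
  (sqrt_iter1 j - sqrt_iter1 i) * (i%:R + 2) <= 2.
Proof.
move=> ij; apply: le_trans (sqrt_iter1_rate i); apply: ler_wpM2r.
  by rewrite addr_ge0 ?ler0n.
by rewrite lerD2r; have /andP[_ ->] := sqrt_iter1_bound j.
Qed.

(* For [w := z j - z i] in [[0, 1]]: [(C w)^2 <= C^2 w <= 2 C^2 / (i + 2)]. *)
Lemma sqrt_iter1_cauchy (C e : rat) : 0 < e -> exists N, forall i j,
  (N <= i)%N -> (i <= j)%N -> (C * (sqrt_iter1 j - sqrt_iter1 i)) ^+ 2 < e.
Proof.
move=> e_gt0; have C2_ge0 := sqr_ge0 C.
have M_ge0 : 0 <= 2 * C ^+ 2 / e by apply: divr_ge0; [exact: mulr_ge0 | exact: ltW].
exists (Num.bound (2 * C ^+ 2 / e)) => i j Ni ij.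
have i2_gt0 : 0 < i%:R + 2 :> rat by rewrite ltr_wpDl ?ler0n.
have C2_lt : 2 * C ^+ 2 < e * (i%:R + 2).
  have := archi_boundP M_ge0; rewrite ltr_pdivrMr // => /lt_le_trans; apply.
  rewrite mulrC ler_wpM2l ?(ltW e_gt0) //.
  by rewrite -(ler_nat rat) in Ni; lra.
have := sqrt_iter1_sub_rate ij; have := sqrt_iter1_sub_ge0 ij.
have /andP[_ zj_le1] := sqrt_iter1_bound j; have /andP[zi_ge0 _] := sqrt_iter1_bound i.
have : sqrt_iter1 j - sqrt_iter1 i <= 1 by lra.
move: (sqrt_iter1 j - sqrt_iter1 i) => w w_le1 w_ge0 w_rate.
have : C ^+ 2 * w * (i%:R + 2) < e * (i%:R + 2).
  by rewrite -mulrA (le_lt_trans _ C2_lt) // mulrC ler_wpM2r.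
rewrite ltr_pM2r // exprMn => C2w_lt; apply: le_lt_trans C2w_lt.
by rewrite ler_wpM2l // expr2 ler_piMr.
Qed.

Fixpoint sqrt_iter (s : {poly rat}) (n : nat) : {poly rat} :=
  if n is n'.+1 then (2^-1)%:P * (s + sqrt_iter s n' * sqrt_iter s n') else 0.

Lemma sqrt_iter_double s n :
  2%:P * sqrt_iter s n.+1 = s + sqrt_iter s n * sqrt_iter s n.
Proof. by rewrite /= mulrA -polyCM mulfV // mul1r. Qed.

Section SqrtIteration.
Variables (A : lalgType rat) (star : A -> A).
Hypothesis star_is_star : is_star star.
Variable h : A.
Hypothesis h_herm : star h = h.
Variable s : {poly rat}.
Hypothesis s_le1 : ev_normle star h s 1.

Local Notation y := (sqrt_iter s).
Local Notation z := sqrt_iter1.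

Lemma ev_normle_sqrt_iter n : ev_normle star h (y n) (z n).
Proof.
elim: n => [|n IHn] /=; first by rewrite -polyC0; apply: ev_normleC.
have /andP[z_ge0 z_le1] := sqrt_iter1_bound n.
apply: ev_normleZ => //; first by rewrite addr_ge0 ?sqr_ge0.
by rewrite expr2; apply: ev_normleD => //; [rewrite mulr_ge0 | apply: ev_normleM].
Qed.

Lemma ev_normle_sqrt_iter_succ n :
  ev_normle star h (y n.+1 - y n) (z n.+1 - z n).
Proof.
elim: n => [|n IHn].
  have -> : y 1 - y 0 = (2^-1)%:P * s by rewrite /=; ring.
  by rewrite /= subr0 expr2 mulr0 addr0; apply: ev_normleZ.
have -> : y n.+2 - y n.+1 = (2^-1)%:P * ((y n.+1 - y n) * (y n.+1 + y n)).
  by rewrite /=; ring.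
have -> : z n.+2 - z n.+1 = 2^-1 * ((z n.+1 - z n) * (z n.+1 + z n)).
  by rewrite /=; field.
have /andP[z_ge0 _] := sqrt_iter1_bound n.
have /andP[z'_ge0 _] := sqrt_iter1_bound n.+1.
have zS_ge0 := sqrt_iter1_sub_ge0 (leqnSn n).
have zD_ge0 : 0 <= z n.+1 + z n by rewrite addr_ge0.
apply: ev_normleZ => //; first by rewrite mulr_ge0.
by apply: ev_normleM => //; apply: ev_normleD => //; apply: ev_normle_sqrt_iter.
Qed.

Lemma ev_normle_sqrt_iter_sub i j : (i <= j)%N ->
  ev_normle star h (y j - y i) (z j - z i).
Proof.
move/subnKC <-; elim: (j - i)%N => [|k IHk].
  by rewrite addn0 !subrr -polyC0; apply: ev_normleC.
have -> : y (i + k.+1) - y i = (y (i + k).+1 - y (i + k)) + (y (i + k) - y i).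
  by rewrite addnS; ring.
have -> : z (i + k.+1) - z i = (z (i + k).+1 - z (i + k)) + (z (i + k) - z i).
  by rewrite addnS; ring.
by apply: ev_normleD; rewrite ?sqrt_iter1_sub_ge0 ?leq_addr //;
  exact: ev_normle_sqrt_iter_succ.
Qed.

End SqrtIteration.

Section SquareRoot.
Variables (A : lalgType rat) (star : A -> A).
Hypothesis star_is_star : is_star star.
Variable x : A.
Hypothesis x_herm : star x = x.
Hypothesis x_almost_pos : forall alpha : rat, 0 < alpha -> Apos star (x + alpha%:A).
Variable l : rat.
Hypothesis l_ge1 : 1 <= l.
Hypothesis x_le_l : Apos star (l%:A - x).

Local Notation k := (l ^- 2).
Local Notation s := (1 - k%:P * 'X).
Local Notation y := (sqrt_iter s).
Local Notation z := sqrt_iter1.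

Lemma l_gt0 : 0 < l. Proof. exact: lt_le_trans ltr01 l_ge1. Qed.

Lemma k_l2 : k * l ^+ 2 = 1.
Proof. by rewrite mulVf // expf_neq0 // gt_eqF // l_gt0. Qed.

Lemma k_gt0 : 0 < k.
Proof. by rewrite invr_gt0 exprn_gt0 // l_gt0. Qed.

Lemma ev_normle_sqrt_arg : ev_normle star x s 1.
Proof.
have kl_le1 : k * l <= 1.
  by rewrite -k_l2 expr2 mulrA; exact: ler_peMr (ltW (mulr_gt0 k_gt0 l_gt0)) l_ge1.
apply: ev_normle_between => // e e_gt0; split.
- have -> : (1 + e)%:P - s = k%:P * ('X + (e * l ^+ 2)%:P) + (e * (1 - k * l ^+ 2))%:P.
    by ring.
  rewrite k_l2 subrr mulr0 addr0; apply: ev_posZ => //; first exact: ltW k_gt0.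
  rewrite /ev_pos rmorphD /= evX evC; apply/x_almost_pos/mulr_gt0 => //.
  by rewrite exprn_gt0 // l_gt0.
- have -> : (1 + e)%:P + s = (2 + e - k * l)%:P + k%:P * (l%:P - 'X) by ring.
  apply: ev_posD => //; first by apply: ev_posC => //; lra.
  by apply: ev_posZ => //; [exact: ltW k_gt0 | rewrite /ev_pos rmorphB /= evX evC].
Qed.

Local Notation P n := (l%:P * (1 - y n)).

Definition sqrt_approx n : A := ev x (P n).

Lemma ev_normle_sqrt_approx_sub i j : (i <= j)%N ->
  ev_normle star x (P i - P j) (l * (z j - z i)).
Proof.
move=> ij; have -> : P i - P j = l%:P * (y j - y i) by ring.
apply: ev_normleZ => //; first exact: ltW l_gt0; first exact: sqrt_iter1_sub_ge0.
by apply: ev_normle_sqrt_iter_sub => //; exact: ev_normle_sqrt_arg.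
Qed.

Lemma cauchy_sqrt_approx : cauchy star sqrt_approx.
Proof.
move=> e e_gt0; have [N z_cauchy] := sqrt_iter1_cauchy l e_gt0.
exists N => m n Nm Nn; rewrite /sqrt_approx -rmorphB /=.
have bound_ge0 i j : (i <= j)%N -> 0 <= l * (z j - z i).
  by move=> ij; rewrite mulr_ge0 ?sqrt_iter1_sub_ge0 // ltW // l_gt0.
case: (leqP m n) => [mn | /ltnW nm].
  apply: norm2_lt_ev (ev_normle_sqrt_approx_sub mn) => //; last exact: z_cauchy.
  exact: bound_ge0.
rewrite -opprB; apply: norm2_lt_ev (ev_normleN (ev_normle_sqrt_approx_sub nm)) => //.
  exact: bound_ge0.
exact: z_cauchy.
Qed.

(* [s = 1 - k x] with [k l^2 = 1], so [l^2 (2 y' - 2 y) = l^2 (1 - y)^2 - x]. *)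
Lemma sqrt_approx_sqr n : P n * P n - 'X = (2 * l ^+ 2)%:P * (y n.+1 - y n).
Proof.
transitivity (P n * P n - (k * l ^+ 2)%:P * 'X); first by rewrite k_l2 polyC1 mul1r.
have -> : (2 * l ^+ 2)%:P * (y n.+1 - y n) =
          (l ^+ 2)%:P * (2%:P * y n.+1) - (2 * l ^+ 2)%:P * y n by rewrite polyCM; ring.
by rewrite sqrt_iter_double; ring.
Qed.

Lemma seq_equiv_sqrt_approx_sqr :
  seq_equiv star (fun n => star (sqrt_approx n) * sqrt_approx n + star 0 * 0) (fun=> x).
Proof.
move=> e e_gt0; have [N z_cauchy] := sqrt_iter1_cauchy (2 * l ^+ 2) e_gt0.
exists N => n Nn.
rewrite /= (star0 star_is_star) mulr0 addr0 /sqrt_approx.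
rewrite (ev_herm star_is_star x_herm) -rmorphM.
rewrite -{2}(evX x) -rmorphB /= sqrt_approx_sqr.
have l2_ge0 : 0 <= 2 * l ^+ 2 by rewrite mulr_ge0 ?sqr_ge0.
have zS_ge0 := sqrt_iter1_sub_ge0 (leqnSn n).
apply: (norm2_lt_ev _ _ _ (z_cauchy _ _ Nn (leqnSn n))) => //; first exact: mulr_ge0.
apply: ev_normleZ => //; apply: ev_normle_sqrt_iter_succ => //; exact: ev_normle_sqrt_arg.
Qed.

Lemma cstar_nonneg_sqrt_approx : cstar_nonneg star x.
Proof.
exists sqrt_approx, (fun=> 0); split; first exact: cauchy_sqrt_approx.
split; first by move=> e e_gt0; exists 0%N => m n _ _; rewrite subrr; exact: norm2_lt0.
split; first exact: seq_equiv_sqrt_approx_sqr.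
move=> e e_gt0; exists 0%N => n _.
rewrite mulr0 (star0 star_is_star) mul0r subrr subr0; exact: norm2_lt0.
Qed.

End SquareRoot.

Lemma Apos_shift_of_cstar_nonneg (A : lalgType rat) (star : A -> A) (x : A) :
  is_star star -> star x = x -> cstar_nonneg star x ->
  forall alpha : rat, 0 < alpha -> Apos star (x + alpha%:A).
Proof.
move=> star_is_star x_herm [a [b [_ [_ [re_x _]]]]] alpha alpha_gt0.
have [N /(_ N (leqnn N)) [c [[_ y2_le] c_lt]]] := re_x _ (exprn_gt0 2 alpha_gt0).
set y := _ - x in y2_le.
have y_herm : star y = y.
  rewrite /y (starB star_is_star) (starD star_is_star) !(starM star_is_star).
  by rewrite !(starK star_is_star) x_herm.
have alpha_ge_y : Apos star (alpha%:A - y).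
  apply: (Apos_sub_of_sqr star_is_star y_herm (mu := c)) => //; first exact: ltW.
  by move: y2_le; rewrite /sle y_herm.
have -> : x + alpha%:A = star (a N) * a N + star (b N) * b N + (alpha%:A - y).
  by rewrite /y opprB addrCA [_ + (x - _)]addrC subrK addrC.
by apply: AposD => //; apply: AposD => //; apply: Apos_sqr.
Qed.

Theorem proposition2p8 (A : lalgType rat) (star : A -> A)
    (Hstar : is_star star) (Harch : archimedean star)
    (x : A) (hx : star x = x) :
  cstar_nonneg star x <->
  (forall alpha : rat, 0 < alpha -> Apos star (x + alpha%:A)).
Proof.
split; first exact: Apos_shift_of_cstar_nonneg.
move=> x_almost_pos.
have [R [R_gt0]] := Harch.2 x; rewrite /sle hx => x2_le.
have x_le : Apos star ((R + 1)%:A - x).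
  by apply: (Apos_sub_of_sqr Hstar hx (mu := R)) => //; nra.
by apply: cstar_nonneg_sqrt_approx x_le => //; lra.
Qed.
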